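(* Let $\mathcal{X}\subseteq\mathbb{R}^n$ and let $h = p_k \circ \dots \circ p_1:\mathbb{R}^n \to \mathcal{Y}$ be a model, where each layer $p_r:\mathbb{R}^{n^{r-1}}\to\mathbb{R}^{n^r}$ ($n^0=n$). Let $g:\mathbb{R}^n\times\mathcal{Y} \to G$ be an explanation function (EF). For $m\in\{1,\dots,k\}$ write $f_m := p_m \circ \dots \circ p_1$. Suppose that for some $i \in \{1,\dots,k\}$, $f_i$ is a $\beta(\epsilon)$-consistent representation with respect to $g$, for a function $\beta:(0,\infty)\to[0,\infty)$. Let $j$ with $i\le j\le k$, and assume that $p_r$ is an $l_r$-Lipschitz function for every $r \in \{i+1,\dots,j\}$. Then $f_j$ is $\hat{\beta}(\epsilon)$-consistent with respect to $g$, where $\hat{\beta}(\epsilon) := \beta(\epsilon) \cdot \prod^{j}_{r=i+1} l_r$.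
   Context: $G$ is a set of explanations equipped with a norm (or distance) written $|\cdot|$; the spaces $\mathbb{R}^{d}$ are also equipped with a norm $|\cdot|$, and Lipschitz continuity is with respect to these norms. For a model $h=c\circ f$ with representation $f:\mathcal{X}\to\mathbb{R}^d$ and an EF $g$, $f$ is called a $\beta(\epsilon)$-consistent representation with respect to $g$ if for every $\epsilon\in(0,\infty)$ and all $x_1,x_2\in\mathcal{X}$: $|g(x_1,h(x_1))-g(x_2,h(x_2))|\le\epsilon$ implies $|f(x_1)-f(x_2)|\le\beta(\epsilon)$. For the layered model, $f_m$ is regarded as the representation with $c=p_k\circ\dots\circ p_{m+1}$. *)

From HB Require Import structures.
From mathcomp Require Import all_boot all_order all_algebra.
From mathcomp Require Import reals.
Set Implicit Arguments. Unset Strict Implicit. Unset Printing Implicit Defensive.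
Import Order.TTheory GRing.Theory Num.Theory.
Local Open Scope ring_scope.

Definition is_norm (R : realType) (d : nat) (N : 'rV[R]_d -> R) : Prop :=
  [/\ forall x, N x = 0 -> x = 0,
      forall (a : R) x, N (a *: x) = `|a| * N x
    & forall x y, N (x + y) <= N x + N y].

Definition lipschitz (R : realType) (d1 d2 : nat)
  (N1 : 'rV[R]_d1 -> R) (N2 : 'rV[R]_d2 -> R)
  (f : 'rV[R]_d1 -> 'rV[R]_d2) (l : R) : Prop :=
  0 <= l /\ forall x y, N2 (f x - f y) <= l * N1 (x - y).

(* Layers: p r : R^{n (r-1)} -> R^{n r} is the paper's p_r (r >= 1; p 0 unused).
   layers_comp p m = f_m = p_m o ... o p_1  (f_0 = id). *)
Fixpoint layers_comp (R : realType) (n : nat -> nat)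
  (p : forall r : nat, 'rV[R]_(n r.-1) -> 'rV[R]_(n r)) (m : nat)
  : 'rV[R]_(n 0%N) -> 'rV[R]_(n m) :=
  match m return 'rV[R]_(n 0%N) -> 'rV[R]_(n m) with
  | 0%N => fun x => x
  | m'.+1 => fun x => p m'.+1 (layers_comp p m' x)
  end.

Definition consistent_rep (R : realType) (n0 d : nat) (X : 'rV[R]_n0 -> Prop)
  (Y G : Type) (dG : G -> G -> R) (g : 'rV[R]_n0 -> Y -> G)
  (h : 'rV[R]_n0 -> Y) (N : 'rV[R]_d -> R) (f : 'rV[R]_n0 -> 'rV[R]_d)
  (beta : R -> R) : Prop :=
  forall eps : R, 0 < eps -> forall x1 x2, X x1 -> X x2 ->
    dG (g x1 (h x1)) (g x2 (h x2)) <= eps -> N (f x1 - f x2) <= beta eps.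

From HB Require Import structures.
From mathcomp Require Import all_boot all_order all_algebra.
From mathcomp Require Import reals.
Import Order.TTheory GRing.Theory Num.Theory.
Local Open Scope ring_scope.

(* Consistency is transported along any map that controls distances of
   representations linearly; between layers [i] and [j] such a control is
   given by the product of the Lipschitz constants of the intermediate layers. *)

Lemma consistent_rep_dominated (R : realType) (n0 d1 d2 : nat)
  (X : 'rV[R]_n0 -> Prop) (Y G : Type) (dG : G -> G -> R)
  (g : 'rV[R]_n0 -> Y -> G) (h : 'rV[R]_n0 -> Y)
  (N1 : 'rV[R]_d1 -> R) (N2 : 'rV[R]_d2 -> R)
  (f1 : 'rV[R]_n0 -> 'rV[R]_d1) (f2 : 'rV[R]_n0 -> 'rV[R]_d2)
  (beta : R -> R) (L : R) :
  0 <= L -> (forall x y, N2 (f2 x - f2 y) <= L * N1 (f1 x - f1 y)) ->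
  consistent_rep X dG g h N1 f1 beta ->
  consistent_rep X dG g h N2 f2 (fun eps => beta eps * L).
Proof.
move=> L_ge0 f2_le cons1 eps eps_gt0 x1 x2 X1 X2 dG_le.
rewrite mulrC; apply: le_trans (f2_le x1 x2) _.
exact/ler_wpM2l/cons1.
Qed.

Lemma layers_comp_lipschitz (R : realType) (n : nat -> nat)
  (N : forall d : nat, 'rV[R]_d -> R)
  (p : forall r : nat, 'rV[R]_(n r.-1) -> 'rV[R]_(n r))
  (i j : nat) (l : nat -> R) :
  (i <= j)%N ->
  (forall r : nat, (i < r <= j)%N -> lipschitz (N (n r.-1)) (N (n r)) (p r) (l r)) ->
  forall x y, N (n j) (layers_comp p j x - layers_comp p j y)
    <= (\prod_(i.+1 <= r < j.+1) l r) * N (n i) (layers_comp p i x - layers_comp p i y).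
Proof.
elim: j => [|j IH] le_iSj lip x y.
  by move: le_iSj; rewrite leqn0 => /eqP ->; rewrite big_geq // mul1r.
have [->|neq_iSj] := eqVneq i j.+1; first by rewrite big_geq // mul1r.
have le_ij : (i <= j)%N by rewrite -ltnS ltn_neqAle neq_iSj le_iSj.
have [l_ge0 lip_p] : lipschitz (N (n j)) (N (n j.+1)) (p j.+1) (l j.+1).
  by apply: lip; rewrite ltnS le_ij leqnn.
rewrite big_nat_recr //= mulrAC.
apply: le_trans (lip_p _ _) _; rewrite [l _ * _]mulrC.
apply: (ler_wpM2r l_ge0); apply: IH => // r /andP[lt_ir le_rj].
by apply: lip; rewrite lt_ir ltnW.
Qed.

Theorem theorem1 (R : realType) (n : nat -> nat)
  (N : forall d : nat, 'rV[R]_d -> R) (HN : forall d : nat, is_norm (N d))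
  (k : nat) (p : forall r : nat, 'rV[R]_(n r.-1) -> 'rV[R]_(n r))
  (X : 'rV[R]_(n 0%N) -> Prop)
  (G : Type) (dG : G -> G -> R) (g : 'rV[R]_(n 0%N) -> 'rV[R]_(n k) -> G)
  (beta : R -> R) (Hbeta : forall eps : R, 0 < eps -> 0 <= beta eps)
  (i : nat) (Hi : (1 <= i <= k)%N)
  (Hcons : consistent_rep X dG g (layers_comp p k) (N (n i)) (layers_comp p i) beta)
  (j : nat) (Hij : (i <= j <= k)%N) (l : nat -> R)
  (Hlip : forall r : nat, (i < r <= j)%N ->
            lipschitz (N (n r.-1)) (N (n r)) (p r) (l r)) :
  consistent_rep X dG g (layers_comp p k) (N (n j)) (layers_comp p j)
    (fun eps => beta eps * \prod_(i.+1 <= r < j.+1) l r).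
Proof.
have [le_ij _] := andP Hij.
apply: consistent_rep_dominated Hcons.
- rewrite big_nat prodr_ge0 // => r /andP[lt_ir lt_rj].
  by case: (Hlip r); rewrite ?lt_ir.
- exact: layers_comp_lipschitz.
Qed.
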